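(* Let $F:\mathcal C\to\mathcal D$ be a faithful functor and let $\perp$ be an independence relation on $\mathcal D$ satisfying invariance. (1) If $F$ admits $2$-completions with respect to $\perp$ and $\perp$ satisfies existence, then $F^{-1}(\perp)$ satisfies existence. (2) If $F$ admits $1$-completions, $\perp$ satisfies uniqueness, and $F^{-1}(\perp)$ satisfies existence, then $F$ admits $2$-completions with respect to $\perp$.
   Context: A commuting square consists of objects $C,A,B,M$ and morphisms $C\to A$, $C\to B$, $A\to M$, $B\to M$ with equal composites $C\to M$. An independence relation $\perp$ is a class of commuting squares (called independent); write $A\perp^M_C B$. $F^{-1}(\perp)$ consists of the commuting squares of $\mathcal C$ whose image under $F$ is in $\perp$. Invariance: for a square $C\to A,C\to B,A\to M,B\to M$ and any $M\to N$, $A\perp^M_C B$ iff the square with $A\to M\to N$, $B\to M\to N$ is independent. Existence: every span $A\leftarrow C\to B$ can be completed to an independent square. Uniqueness: any two independent squares on the same span $A\leftarrow C\to B$, with tops $M,M'$, can be amalgamated: there are $N$ and $M\to N$, $M'\to N$ such that the two composites $A\to N$ agree and the two composites $B\to N$ agree. For faithful $F$: a $1$-completion of a morphism $f:F(A)\to B$ in $\mathcal D$ is a morphism $g:A\to C$ in $\mathcal C$ together with $h:B\to F(C)$ such that $F(g)=hf$; $F$ admits $1$-completions if every such $f$ has one. A $2$-completion of a commuting $\perp$-independent square $F(C)\xrightarrow{F(c_A)}F(A)$, $F(C)\xrightarrow{F(c_B)}F(B)$, $F(A)\xrightarrow{x}D$, $F(B)\xrightarrow{y}D$ in $\mathcal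 D$ (with $c_A,c_B$ morphisms of $\mathcal C$) is an object $E$ of $\mathcal C$, a morphism $h:D\to F(E)$ and morphisms $f:A\to E$, $g:B\to E$ in $\mathcal C$ with $F(f)=hx$ and $F(g)=hy$; $F$ admits $2$-completions with respect to $\perp$ if every such independent square has a $2$-completion. *)

Set Implicit Arguments.
Unset Strict Implicit.

(* Composition is written in diagrammatic order: comp f g = g o f. *)
Record Category := {
  Ob :> Type;
  Hom : Ob -> Ob -> Type;
  idm : forall A, Hom A A;
  comp : forall A B C, Hom A B -> Hom B C -> Hom A C;
  comp_id_l : forall A B (f : Hom A B), comp (idm A) f = f;
  comp_id_r : forall A B (f : Hom A B), comp f (idm B) = f;
  comp_assoc : forall A B C D (f : Hom A B) (g : Hom B C) (h : Hom C D),
      comp (comp f g) h = comp f (comp g h)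
}.

Arguments Hom {c} _ _.
Arguments idm {c} _.
Arguments comp {c A B C} _ _.

Record Functor (C D : Category) := {
  Fob :> Ob C -> Ob D;
  Fhom : forall A B, Hom A B -> Hom (Fob A) (Fob B);
  F_id : forall A, Fhom (idm A) = idm (Fob A);
  F_comp : forall A B E (f : Hom A B) (g : Hom B E),
      Fhom (comp f g) = comp (Fhom f) (Fhom g)
}.
Arguments Fhom {C D} _ {A B} _.

Definition faithful (C D : Category) (F : Functor C D) : Prop :=
  forall (A B : C) (f g : Hom A B), Fhom F f = Fhom F g -> f = g.

Definition commutes (C : Category) (Co A B M : C)
  (cA : Hom Co A) (cB : Hom Co B) (a : Hom A M) (b : Hom B M) : Prop :=
  comp cA a = comp cB b.

Record IndepRel (C : Category) := {
  indep : forall (Co A B M : C),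
      Hom Co A -> Hom Co B -> Hom A M -> Hom B M -> Prop;
  indep_comm : forall Co A B M (cA : Hom Co A) (cB : Hom Co B)
      (a : Hom A M) (b : Hom B M), indep cA cB a b -> commutes cA cB a b
}.
Arguments indep {C} _ {Co A B M} _ _ _ _.

Definition invariance (C : Category) (I : IndepRel C) : Prop :=
  forall (Co A B M N : C) (cA : Hom Co A) (cB : Hom Co B)
    (a : Hom A M) (b : Hom B M) (m : Hom M N),
    commutes cA cB a b ->
    (indep I cA cB a b <-> indep I cA cB (comp a m) (comp b m)).

Definition existence (C : Category) (I : IndepRel C) : Prop :=
  forall (Co A B : C) (cA : Hom Co A) (cB : Hom Co B),
    exists (M : C) (a : Hom A M) (b : Hom B M), indep I cA cB a b.

Definition uniqueness (C : Category) (I : IndepRel C) : Prop :=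
  forall (Co A B M M' : C) (cA : Hom Co A) (cB : Hom Co B)
    (a : Hom A M) (b : Hom B M) (a' : Hom A M') (b' : Hom B M'),
    indep I cA cB a b -> indep I cA cB a' b' ->
    exists (N : C) (m : Hom M N) (m' : Hom M' N),
      comp a m = comp a' m' /\ comp b m = comp b' m'.

Definition preimage_indep (C D : Category) (F : Functor C D) (I : IndepRel D)
  (Co A B M : C) (cA : Hom Co A) (cB : Hom Co B) (a : Hom A M) (b : Hom B M)
  : Prop :=
  commutes cA cB a b /\ indep I (Fhom F cA) (Fhom F cB) (Fhom F a) (Fhom F b).

Definition preimage (C D : Category) (F : Functor C D) (I : IndepRel D)
  : IndepRel C.
Proof.
  refine {| indep := @preimage_indep C D F I |}.
  intros Co A B M cA cB a b [H _]; exact H.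
Defined.

Definition admits_1_completions (C D : Category) (F : Functor C D) : Prop :=
  forall (A : C) (B : D) (f : Hom (F A) B),
    exists (Co : C) (g : Hom A Co) (h : Hom B (F Co)),
      Fhom F g = comp f h.

Definition admits_2_completions (C D : Category) (F : Functor C D)
  (I : IndepRel D) : Prop :=
  forall (Co A B : C) (cA : Hom Co A) (cB : Hom Co B) (Dd : D)
    (x : Hom (F A) Dd) (y : Hom (F B) Dd),
    indep I (Fhom F cA) (Fhom F cB) x y ->
    exists (E : C) (h : Hom Dd (F E)) (f : Hom A E) (g : Hom B E),
      Fhom F f = comp x h /\ Fhom F g = comp y h.


(* (1): complete an independent square on the image span in D, then 2-complete
   it; faithfulness makes the completed square commute in C, and invariance
   keeps its image independent after post-composing with h.
   (2): amalgamate the given independent square with the image of an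
   F^{-1}(perp)-independent square on the same span, and 1-complete the
   amalgamating map out of the image. *)

Lemma faithful_reflects_commutes {C D : Category} {F : Functor C D}
  {Co A B M : C} {cA : Hom Co A} {cB : Hom Co B} {a : Hom A M} {b : Hom B M} :
  faithful F ->
  commutes (Fhom F cA) (Fhom F cB) (Fhom F a) (Fhom F b) ->
  commutes cA cB a b.
Proof.
  intros Hfaith Hcomm; apply Hfaith.
  rewrite !F_comp; exact Hcomm.
Qed.

Lemma preimage_existence {C D : Category} {F : Functor C D} {I : IndepRel D} :
  faithful F -> invariance I -> admits_2_completions F I -> existence I ->
  existence (preimage F I).
Proof.
  intros Hfaith Hinv H2 Hex Co A B cA cB.
  destruct (Hex _ _ _ (Fhom F cA) (Fhom F cB)) as [M [x [y Hxy]]].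
  destruct (H2 _ _ _ cA cB _ x y Hxy) as [E [h [f [g [Hf Hg]]]]].
  assert (Hcomm : commutes (Fhom F cA) (Fhom F cB) x y)
    by exact (indep_comm Hxy).
  assert (Hindep : indep I (Fhom F cA) (Fhom F cB) (Fhom F f) (Fhom F g)).
  { rewrite Hf, Hg; apply (Hinv _ _ _ _ _ _ _ _ _ h Hcomm); exact Hxy. }
  exists E, f, g; split.
  - exact (faithful_reflects_commutes Hfaith (indep_comm Hindep)).
  - exact Hindep.
Qed.

Lemma admits_2_completions_of_preimage_existence
  {C D : Category} {F : Functor C D} {I : IndepRel D} :
  admits_1_completions F -> uniqueness I -> existence (preimage F I) ->
  admits_2_completions F I.
Proof.
  intros H1 Huniq Hex Co A B cA cB Dd x y Hxy.
  destruct (Hex _ _ _ cA cB) as [M [a [b [_ Hab]]]].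
  destruct (Huniq _ _ _ _ _ _ _ _ _ _ _ Hxy Hab) as [N [m [m' [Ha Hb]]]].
  destruct (H1 _ _ m') as [E [g [h Hg]]].
  exists E, (comp m h), (comp a g), (comp b g); split.
  - rewrite F_comp, Hg, <- !comp_assoc, Ha; reflexivity.
  - rewrite F_comp, Hg, <- !comp_assoc, Hb; reflexivity.
Qed.

Theorem theorem5p7 (C D : Category) (F : Functor C D) (I : IndepRel D) :
  faithful F -> invariance I ->
  (admits_2_completions F I -> existence I -> existence (preimage F I)) /\
  (admits_1_completions F -> uniqueness I -> existence (preimage F I) ->
     admits_2_completions F I).
Proof.
  intros Hfaith Hinv; split.
  - exact (preimage_existence Hfaith Hinv).
  - exact admits_2_completions_of_preimage_existence.
Qed.
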